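(* Let $(k,R,t)\in\mathbb{R}^3$ with $R>0$ and $t\neq 0$, put $c=\frac{1-t^2}{1+t^2}$, $s=\frac{2t}{1+t^2}$, and let $$F_1^h=Y^2-(Xs-Yc)^2+2ZW-W^2,\qquad F_2^h=\bigl(X^2-2kZW+(R^2+k^2)W^2\bigr)^2-4R^2W^2(X^2+Y^2).$$ Let $T\subset\mathbb{P}^3$ be the projective closure of the trisector $\{F_1^h(x,y,z,1)=F_2^h(x,y,z,1)=0\}\subset\mathbb{R}^3$. Then $T$ meets the plane at infinity $\{W=0\}$ in the unique point $p_\infty=[0:0:1:0]$. In the affine chart $Z=1$, the first nonzero homogeneous term of a local defining equation of $T$ at $p_\infty$ is $E(X,Y)^2$, where $$E(X,Y)=X^2-2kQ(X,Y),\qquad Q(X,Y)=\tfrac12\bigl(s^2X^2-2scXY-s^2Y^2\bigr).$$ The discriminant of the quadratic form $E$ is $\Delta_Q=4ks^2(k-1)$. Hence the asymptotic direction pattern degenerates (i.e. $E$ fails to factor into two distinct linear forms) exactly when $\Delta_Q=0$, that is, at $k=0$ and $k=1$.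
   Context: $F_1^h,F_2^h$ are the homogenizations ($x=X/W$, $y=Y/W$, $z=Z/W$) of the $L_1$–$L_2$ bisector $y^2-(xs-yc)^2+2z-1$ and the polynomialized $L_1$–circle bisector $(x^2-2kz+R^2+k^2)^2-4R^2(x^2+y^2)$, for $L_1$ the $x$-axis, $L_2$ the line through $(0,0,1)$ with direction $(c,s,0)$, and the circle of radius $R$ centered at $(0,0,k)$ in the plane $z=k$. The projective closure is the zero set of the saturated ideal $(\langle F_1^h,F_2^h\rangle : W^\infty)$. In the chart $Z=1$ with $p_\infty$ at the origin of $(X,Y,W)$, the equation $F_1^h(X,Y,1,W)=0$ has a unique local analytic solution $W=\omega(X,Y)$ with $\omega(0,0)=0$ (implicit function theorem, since $\partial_W F_1^h=2$ there), and the local defining equation is $F_2^h(X,Y,1,\omega(X,Y))=0$. *)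

From HB Require Import structures.
From mathcomp Require Import all_boot all_order all_algebra.
From mathcomp Require Import reals complex.
From mathcomp Require Import mpoly.

Set Implicit Arguments.
Unset Strict Implicit.
Unset Printing Implicit Defensive.

Import Order.TTheory GRing.Theory Num.Theory.
Local Open Scope ring_scope.

Section Trisector.
Variable R : realType.

Definition vX : {mpoly R[4]} := 'X_(0 : 'I_4).
Definition vY : {mpoly R[4]} := 'X_(1 : 'I_4).
Definition vZ : {mpoly R[4]} := 'X_(2 : 'I_4).
Definition vW : {mpoly R[4]} := 'X_(3 : 'I_4).

Definition cpar (t : R) : R := (1 - t ^+ 2) / (1 + t ^+ 2).
Definition spar (t : R) : R := (2 * t) / (1 + t ^+ 2).

Definition F1h (t : R) : {mpoly R[4]} :=
  vY ^+ 2 - (vX * (spar t)%:MP - vY * (cpar t)%:MP) ^+ 2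
  + 2%:R%:MP * vZ * vW - vW ^+ 2.

Definition F2h (k r : R) : {mpoly R[4]} :=
  (vX ^+ 2 - (2 * k)%:MP * vZ * vW + (r ^+ 2 + k ^+ 2)%:MP * vW ^+ 2) ^+ 2
  - (4 * r ^+ 2)%:MP * vW ^+ 2 * (vX ^+ 2 + vY ^+ 2).

Definition pt4 (x y z w : R) : 'I_4 -> R :=
  fun i => nth 0 [:: x; y; z; w] i.

Definition in_saturation (k r t : R) (P : {mpoly R[4]}) : Prop :=
  exists (m : nat) (A B : {mpoly R[4]}),
    vW ^+ m * P = A * F1h t + B * F2h k r.

(* The nonzero vector (x,y,z,w) represents a point [x:y:z:w] of the
   projective closure T, i.e. of the zero set of the saturated ideal. *)
Definition in_closure (k r t : R) (x y z w : R) : Prop :=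
  [|| x != 0, y != 0, z != 0 | w != 0] /\
  forall P, in_saturation k r t P -> P.@[pt4 x y z w] = 0.

Definition Qform (F : fieldType) (s c : F) (X Y : F) : F :=
  2^-1 * (s ^+ 2 * X ^+ 2 - 2 * s * c * X * Y - s ^+ 2 * Y ^+ 2).
Definition Eform (F : fieldType) (k s c : F) (X Y : F) : F :=
  X ^+ 2 - 2 * k * Qform s c X Y.

Definition local_eq (k r t : R) (omega : R -> R -> R) (X Y : R) : R :=
  (F2h k r).@[pt4 X Y 1 (omega X Y)].

(* omega is the local solution W = omega(X,Y), omega(0,0) = 0, of
   F_1^h(X,Y,1,W) = 0 near the origin (continuous at the origin; by the
   implicit function theorem this determines the analytic solution). *)
Definition local_solution (t : R) (omega : R -> R -> R) : Prop :=
  omega 0 0 = 0 /\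
  (forall e : R, 0 < e -> exists2 d : R, 0 < d &
      forall X Y, `|X| < d -> `|Y| < d -> `|omega X Y| < e) /\
  (exists2 d : R, 0 < d &
      forall X Y, `|X| < d -> `|Y| < d ->
        (F1h t).@[pt4 X Y 1 (omega X Y)] = 0).

Definition leading_form_is (G H : R -> R -> R) (deg : nat) : Prop :=
  (exists X Y, H X Y != 0) /\
  exists2 C : R, 0 < C & exists2 d : R, 0 < d &
    forall X Y, `|X| < d -> `|Y| < d ->
      `|G X Y - H X Y| <= C * (`|X| + `|Y|) ^+ deg.+1.

Definition qdisc (F : fieldType) (f : F -> F -> F) : F :=
  let a := f 1 0 in let c := f 0 1 in let b := f 1 1 - a - c in
  b ^+ 2 - 4 * a * c.

Definition factors_distinct_lin (f : R[i] -> R[i] -> R[i]) : Prop :=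
  exists a1 b1 a2 b2 : R[i], a1 * b2 - a2 * b1 != 0 /\
    forall X Y, f X Y = (a1 * X + b1 * Y) * (a2 * X + b2 * Y).

End Trisector.

(* On the plane W = 0, F_2 reduces to X^4 and then F_1 to s^2 Y^2, so T can
   only meet it at p_oo.  Conversely p_oo is a limit of complex points of the
   affine trisector.  The quadric F_1 = 0 is rational: near [0:0:z:0] it is
   swept by the points V(a,u) of [quadric_pt], where W = z a u, and along it
   F_2 = z^4 g_u(a) for a quartic g_u with g_u(0) = (2 be u)^4 and leading
   coefficient tending to al^4 as u -> 0, so g_u has a nonzero root a = O(u).
   Every element of the saturation vanishes at V(a,u) because W <> 0 there,
   hence at p_oo by continuity.
   In the chart Z = 1, F_1 = 0 reads 2W - W^2 = 2Q(X,Y), so W = O(X^2 + Y^2),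
   and F_2 = (E + K W^2)^2 - 4 R^2 W^2 (X^2 + Y^2) with K = R^2 + k^2 - k,
   which is E^2 + O(|(X,Y)|^6).
   Finally E = (1 - k s^2) X^2 + 2 k s c X Y + k s^2 Y^2 has discriminant
   4 k s^2 (k (c^2 + s^2) - 1) = 4 k s^2 (k - 1), and over C a binary
   quadratic form splits into distinct linear factors iff its discriminant is
   nonzero. *)

From HB Require Import structures.
From mathcomp Require Import all_boot all_order all_algebra.
From mathcomp Require Import reals complex.
From mathcomp Require Import mpoly.
From mathcomp Require Import ring lra.

Set Implicit Arguments.
Unset Strict Implicit.
Unset Printing Implicit Defensive.

Import Order.TTheory GRing.Theory Num.Theory.
Local Open Scope ring_scope.
Local Open Scope complex_scope.
Import Normc.

Section Evaluation.
Variables (R : realType) (S : comNzRingType) (f : {rmorphism R -> S}).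
Variable h : 'I_4 -> S.

Lemma mmap_F1h t : mmap f h (F1h t) =
  h 1 ^+ 2 - (h 0 * f (spar t) - h 1 * f (cpar t)) ^+ 2 + 2 * h 2 * h 3 - h 3 ^+ 2.
Proof.
set s := spar t; set c := cpar t.
rewrite /F1h /vX /vY /vZ /vW !(rmorphB, rmorphD, rmorphM, rmorphXn) /=.
by rewrite !mmapX !mmap1U !mmapC rmorph1; ring.
Qed.

Lemma mmap_F2h k r : mmap f h (F2h k r) =
  (h 0 ^+ 2 - f (2 * k) * h 2 * h 3 + f (r ^+ 2 + k ^+ 2) * h 3 ^+ 2) ^+ 2
  - f (4 * r ^+ 2) * h 3 ^+ 2 * (h 0 ^+ 2 + h 1 ^+ 2).
Proof.
set a := 2 * k; set b := r ^+ 2 + k ^+ 2; set d := 4 * r ^+ 2.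
rewrite /F2h /vX /vY /vZ /vW !(rmorphB, rmorphD, rmorphM, rmorphXn) /=.
by rewrite !mmapX !mmap1U !mmapC.
Qed.

End Evaluation.

Lemma meval_F1h (R : realType) (v : 'I_4 -> R) t : (F1h t).@[v] =
  v 1 ^+ 2 - (v 0 * spar t - v 1 * cpar t) ^+ 2 + 2 * v 2 * v 3 - v 3 ^+ 2.
Proof. exact: mmap_F1h. Qed.

Lemma meval_F2h (R : realType) (v : 'I_4 -> R) k r : (F2h k r).@[v] =
  (v 0 ^+ 2 - 2 * k * v 2 * v 3 + (r ^+ 2 + k ^+ 2) * v 3 ^+ 2) ^+ 2
  - 4 * r ^+ 2 * v 3 ^+ 2 * (v 0 ^+ 2 + v 1 ^+ 2).
Proof. exact: mmap_F2h. Qed.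

Section RationalParametrization.
Variables (R : realType) (t : R).

Let den_neq0 : 1 + t ^+ 2 != 0.
Proof. by rewrite gt_eqF // ltr_pwDl // sqr_ge0. Qed.

Lemma cpar_spar_sqr : cpar t ^+ 2 + spar t ^+ 2 = 1.
Proof. by rewrite /cpar /spar; field. Qed.

Lemma spar_neq0 : t != 0 -> spar t != 0.
Proof. by move=> ht; rewrite /spar !mulf_neq0 ?invr_eq0 ?pnatr_eq0. Qed.

Lemma subr_cpar_neq0 : t != 0 -> 1 - cpar t != 0.
Proof.
move=> ht; have -> : 1 - cpar t = 2 * t ^+ 2 / (1 + t ^+ 2) by rewrite /cpar; field.
by rewrite !mulf_neq0 ?invr_eq0 ?expf_neq0 ?pnatr_eq0.
Qed.

Lemma addr_cpar_neq0 : 1 + cpar t != 0.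
Proof.
have -> : 1 + cpar t = 2 / (1 + t ^+ 2) by rewrite /cpar; field.
by rewrite mulf_neq0 ?invr_eq0 ?pnatr_eq0.
Qed.

End RationalParametrization.

Lemma Eform_coef (F : numFieldType) (k s c X Y : F) :
  Eform k s c X Y = (1 - k * s ^+ 2) * X ^+ 2 + 2 * k * s * c * X * Y + k * s ^+ 2 * Y ^+ 2.
Proof. by rewrite /Eform /Qform; field. Qed.

Lemma qdisc_Eform (F : numFieldType) (k s c : F) : c ^+ 2 + s ^+ 2 = 1 ->
  qdisc (Eform k s c) = 4 * k * s ^+ 2 * (k - 1).
Proof.
move=> cs1; apply/eqP; rewrite -subr_eq0.
have -> : qdisc (Eform k s c) - 4 * k * s ^+ 2 * (k - 1) =
    4 * k ^+ 2 * s ^+ 2 * (c ^+ 2 + s ^+ 2 - 1) by rewrite /qdisc !Eform_coef; ring.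
by rewrite cs1 subrr mulr0.
Qed.

Lemma distinct_linear_factorsP (F : numClosedFieldType) (f : F -> F -> F) (a b c : F) :
  (forall X Y, f X Y = a * X ^+ 2 + b * X * Y + c * Y ^+ 2) ->
  (exists a1 b1 a2 b2 : F, a1 * b2 - a2 * b1 != 0 /\
     forall X Y, f X Y = (a1 * X + b1 * Y) * (a2 * X + b2 * Y))
  <-> b ^+ 2 - 4 * a * c != 0.
Proof.
move=> fE; split=> [[a1 [b1 [a2 [b2 [det_neq0 f_factor]]]]] | disc_neq0].
  have coef X Y : f X Y = a1 * a2 * X ^+ 2 + (a1 * b2 + a2 * b1) * X * Y + b1 * b2 * Y ^+ 2.
    by rewrite f_factor; ring.
  have ea : a = a1 * a2.
    by transitivity (a * 1 ^+ 2 + b * 1 * 0 + c * 0 ^+ 2); [ring | rewrite -fE coef; ring].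
  have ec : c = b1 * b2.
    by transitivity (a * 0 ^+ 2 + b * 0 * 1 + c * 1 ^+ 2); [ring | rewrite -fE coef; ring].
  have eb : b = a1 * b2 + a2 * b1.
    transitivity (a * 1 ^+ 2 + b * 1 * 1 + c * 1 ^+ 2 - a - c); first ring.
    by rewrite -fE coef ea ec; ring.
  have -> : b ^+ 2 - 4 * a * c = (a1 * b2 - a2 * b1) ^+ 2 by rewrite ea eb ec; ring.
  exact: expf_neq0.
have [a0 | a_neq0] := eqVneq a 0.
  have b_neq0 : b != 0 by apply: contraNneq disc_neq0 => ->; rewrite a0; apply/eqP; ring.
  exists 0, 1, b, c; split; first by rewrite mul0r mulr1 sub0r oppr_eq0.
  by move=> X Y; rewrite fE a0; ring.
pose d := sqrtC (b ^+ 2 - 4 * a * c).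
have d_neq0 : d != 0 by apply: contraNneq disc_neq0 => d0; rewrite -[_ - _]sqrtCK -/d d0 expr0n.
exists a, ((b - d) / 2), 1, ((b + d) / (2 * a)); split.
  by have -> : a * ((b + d) / (2 * a)) - 1 * ((b - d) / 2) = d by field.
have cE : c = (b ^+ 2 - d ^+ 2) / (4 * a) by rewrite sqrtCK; field.
by move=> X Y; rewrite fE cE; field.
Qed.

Lemma qdisc_Eform_eq0 (F : numFieldType) (k s c : F) : c ^+ 2 + s ^+ 2 = 1 -> s != 0 ->
  qdisc (Eform k s c) = 0 <-> k = 0 \/ k = 1.
Proof.
move=> cs1 s_neq0; rewrite qdisc_Eform //; split=> [/eqP | [] ->]; [|ring|ring].
rewrite !mulf_eq0 pnatr_eq0 (negbTE s_neq0) /= !orbF subr_eq0.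
by case/orP=> /eqP ->; [left | right].
Qed.

Lemma not_factors_distinct_lin_Eform (R : realType) (k s c : R) : c ^+ 2 + s ^+ 2 = 1 ->
  (~ factors_distinct_lin (Eform k%:C s%:C c%:C)) <-> qdisc (Eform k s c) = 0.
Proof.
move=> cs1; rewrite qdisc_Eform // /factors_distinct_lin (distinct_linear_factorsP (Eform_coef _ _ _)).
have -> : (2 * k%:C * s%:C * c%:C) ^+ 2 - 4 * (1 - k%:C * s%:C ^+ 2) * (k%:C * s%:C ^+ 2)
    = (4 * k * s ^+ 2 * (k - 1))%:C.
  transitivity (4 * k%:C * s%:C ^+ 2 * (k%:C * (c ^+ 2 + s ^+ 2)%:C - 1)).
    by rewrite rmorphD !rmorphXn; ring.
  by rewrite cs1 mulr1 !(rmorphM, rmorphB, rmorphXn, rmorph_nat, rmorph1).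
rewrite fmorph_eq0; split=> [/negP/negbNE/eqP | -> /negP]; by [].
Qed.

Section RealEstimates.
Variable R : realFieldType.

Lemma abs_le_abs_of_quadratic (w q : R) : `|w| < 2^-1 -> 2 * w - w ^+ 2 = q -> `|w| <= `|q|.
Proof.
move=> w_small <-; have h2w : 1 <= 2 - w by move: w_small; rewrite ltr_norml; lra.
rewrite (_ : 2 * w - w ^+ 2 = w * (2 - w)); last ring.
by rewrite normrM ler_peMr // ger0_norm //; lra.
Qed.

Lemma sqr_le_of_abs_le (w S : R) : `|w| <= S -> w ^+ 2 <= S ^+ 2.
Proof.
move=> wS; rewrite -real_normK ?num_real // lerXn2r // nnegrE //.
exact: le_trans wS.
Qed.

Lemma sum_sqr_le_sqr_sum (x y : R) : x ^+ 2 + y ^+ 2 <= (`|x| + `|y|) ^+ 2.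
Proof.
rewrite -(real_normK (num_real x)) -(real_normK (num_real y)).
by have := normr_ge0 x; have := normr_ge0 y; nra.
Qed.

Lemma cube_sum_sqr_le (x y : R) : `|x| < 1 -> `|y| < 1 ->
  (x ^+ 2 + y ^+ 2) ^+ 3 <= 2 * (`|x| + `|y|) ^+ 5.
Proof.
move=> x1 y1; set rho := `|x| + `|y|.
have rho0 : 0 <= rho by rewrite addr_ge0.
have rho2 : rho <= 2 by rewrite /rho; lra.
apply: (@le_trans _ _ ((rho ^+ 2) ^+ 3)).
  by rewrite lerXn2r ?nnegrE ?addr_ge0 ?sqr_ge0 ?sum_sqr_le_sqr_sum.
rewrite -exprM (_ : (2 * 3)%N = 5.+1) // exprS ler_wpM2r //.
exact: exprn_ge0.
Qed.

Lemma local_remainder_le (K r : R) (e w S A : R) :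
  `|e| <= A * S -> `|w| <= S -> S <= 2 ->
  `|2 * e * K * w ^+ 2 + K ^+ 2 * w ^+ 4 - 4 * r ^+ 2 * w ^+ 2 * S|
    <= (2 * A * `|K| + 2 * K ^+ 2 + 4 * r ^+ 2) * S ^+ 3.
Proof.
move=> eS wS S2; have S0 : 0 <= S := le_trans (normr_ge0 w) wS.
have w2 := sqr_le_of_abs_le wS.
have w4 : w ^+ 4 <= S ^+ 4.
  by rewrite (_ : 4 = 2 * 2)%N // !exprM lerXn2r ?nnegrE ?sqr_ge0.
have w4_ge0 : 0 <= w ^+ 4 by rewrite (_ : 4 = 2 * 2)%N // exprM sqr_ge0.
have T1 : `|2 * e * K * w ^+ 2| <= 2 * A * `|K| * S ^+ 3.
  rewrite normrM (ger0_norm (sqr_ge0 w)) !normrM normr_nat.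
  have := ler_pM (normr_ge0 e) (sqr_ge0 w) eS w2.
  by have := normr_ge0 K; nra.
have T2 : `|K ^+ 2 * w ^+ 4| <= 2 * K ^+ 2 * S ^+ 3.
  rewrite ger0_norm ?(mulr_ge0 (sqr_ge0 K) w4_ge0) //.
  have : S ^+ 4 <= 2 * S ^+ 3 by rewrite exprS; have := exprn_ge0 3 S0; nra.
  by have := sqr_ge0 K; nra.
have T3 : `|4 * r ^+ 2 * w ^+ 2 * S| <= 4 * r ^+ 2 * S ^+ 3.
  rewrite ger0_norm ?(mulr_ge0 (mulr_ge0 (mulr_ge0 _ (sqr_ge0 r)) (sqr_ge0 w)) S0) //.
  have : w ^+ 2 * S <= S ^+ 2 * S by rewrite ler_wpM2r.
  by have := sqr_ge0 r; nra.
apply: (le_trans (ler_normB _ _)); apply: (le_trans (lerD (ler_normD _ _) (lexx _))).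
lra.
Qed.

Lemma small_pow4_lt (x A L eta : R) : 0 < eta -> 0 < A -> 0 <= x ->
  x <= eta * A / 8 -> A ^+ 4 / 2 < L -> x ^+ 4 < (eta / 2) ^+ 4 * L.
Proof.
move=> eta_gt0 A_gt0 x_ge0 x_le A4_lt.
have x4 : x ^+ 4 <= (eta * A / 8) ^+ 4.
  by apply: lerXn2r x_le; rewrite nnegrE //; have := mulr_gt0 eta_gt0 A_gt0; lra.
apply: (le_lt_trans x4).
have -> : (eta * A / 8) ^+ 4 = (eta / 2) ^+ 4 * (A ^+ 4 / 256) by field.
rewrite ltr_pM2l ?exprn_gt0 ?divr_gt0 //; apply: le_lt_trans A4_lt.
by rewrite ler_pM2l ?exprn_gt0 // lef_pV2 ?posrE; lra.
Qed.

End RealEstimates.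

Section LocalEquation.
Variables (R : realType) (k r t : R).
Local Notation s := (spar t).
Local Notation c := (cpar t).

Lemma F1h_chart x y w :
  (F1h t).@[pt4 x y 1 w] = 2 * w - w ^+ 2 - 2 * Qform s c x y.
Proof.
rewrite meval_F1h /pt4 /= /Qform.
by have := congr1 (fun a => y ^+ 2 * a) (cpar_spar_sqr t) => /=; lra.
Qed.

Lemma abs_twoQ_le x y : `|2 * Qform s c x y| <= x ^+ 2 + y ^+ 2.
Proof.
have cs1 := cpar_spar_sqr t.
have qE : 2 * Qform s c x y = (s * x - c * y) ^+ 2 - y ^+ 2.
  by rewrite /Qform; have := congr1 (fun a => y ^+ 2 * a) cs1 => /=; lra.
have rot : (s * x - c * y) ^+ 2 + (c * x + s * y) ^+ 2 = x ^+ 2 + y ^+ 2.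
  by rewrite -[RHS]mul1r -cs1; ring.
rewrite qE ler_norml; have := sqr_ge0 (s * x - c * y); have := sqr_ge0 (c * x + s * y).
by have := sqr_ge0 x; have := sqr_ge0 y; lra.
Qed.

Lemma abs_Eform_le x y : `|Eform k s c x y| <= (1 + `|k|) * (x ^+ 2 + y ^+ 2).
Proof.
rewrite (_ : Eform k s c x y = x ^+ 2 - k * (2 * Qform s c x y)); last by rewrite /Eform; ring.
apply: (le_trans (ler_normB _ _)); rewrite ger0_norm ?sqr_ge0 // normrM.
have := ler_wpM2l (normr_ge0 k) (abs_twoQ_le x y).
by have := sqr_ge0 y; lra.
Qed.

Lemma F2h_chart_sub_Eform_sqr x y w : 2 * w - w ^+ 2 = 2 * Qform s c x y ->
  let K := r ^+ 2 + k ^+ 2 - k in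
  (F2h k r).@[pt4 x y 1 w] - Eform k s c x y ^+ 2 =
  2 * Eform k s c x y * K * w ^+ 2 + K ^+ 2 * w ^+ 4
  - 4 * r ^+ 2 * w ^+ 2 * (x ^+ 2 + y ^+ 2).
Proof.
move=> on_F1 K; have EE : Eform k s c x y = x ^+ 2 - k * (2 * w - w ^+ 2).
  by rewrite on_F1 /Eform; ring.
by rewrite meval_F2h /pt4 /= EE /K; ring.
Qed.

Lemma Eform_sqr_neq0 : exists X Y, Eform k s c X Y ^+ 2 != 0.
Proof.
have E10 : Eform k s c 1 0 = 1 - k * s ^+ 2 by rewrite Eform_coef; ring.
have E01 : Eform k s c 0 1 = k * s ^+ 2 by rewrite Eform_coef; ring.
have [ks0 | ks_neq0] := eqVneq (k * s ^+ 2) 0.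
  by exists 1, 0; rewrite expf_neq0 // E10 ks0 subr0 oner_neq0.
by exists 0, 1; rewrite expf_neq0 // E01.
Qed.

Lemma local_eq_leading_form omega : local_solution t omega ->
  leading_form_is (local_eq k r t omega) (fun X Y => Eform k s c X Y ^+ 2) 4.
Proof.
case=> [_ [omega_small [d0 d0_gt0 omega_on_F1]]].
have [d1 d1_gt0 omega_half] := omega_small 2^-1 ltac:(by rewrite invr_gt0).
pose K := r ^+ 2 + k ^+ 2 - k.
pose C0 := 2 * (1 + `|k|) * `|K| + 2 * K ^+ 2 + 4 * r ^+ 2.
have C0_ge0 : 0 <= C0.
  rewrite /C0; have := normr_ge0 k; have := normr_ge0 K.
  by have := sqr_ge0 K; have := sqr_ge0 r; nra.
split; first exact: Eform_sqr_neq0.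
exists (2 * C0 + 1); first lra.
exists (Num.min d0 (Num.min d1 1)); first by rewrite !lt_min d0_gt0 d1_gt0 ltr01.
move=> x y; rewrite !lt_min => /and3P[x0 x1 x2] /and3P[y0 y1 y2].
set w := omega x y.
have on_F1 : 2 * w - w ^+ 2 = 2 * Qform s c x y.
  by apply/eqP; rewrite -subr_eq0 -F1h_chart omega_on_F1.
have wS : `|w| <= x ^+ 2 + y ^+ 2.
  exact: le_trans (abs_le_abs_of_quadratic (omega_half x y x1 y1) on_F1) (abs_twoQ_le x y).
have S2 : x ^+ 2 + y ^+ 2 <= 2.
  have := sqr_le_of_abs_le (ltW x2); have := sqr_le_of_abs_le (ltW y2).
  by rewrite expr1n; lra.
rewrite /local_eq -/w F2h_chart_sub_Eform_sqr // -/K.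
apply: (le_trans (local_remainder_le K r (abs_Eform_le x y) wS S2)); rewrite -/C0.
have := ler_wpM2l C0_ge0 (cube_sum_sqr_le x2 y2).
by have := exprn_ge0 5 (addr_ge0 (normr_ge0 x) (normr_ge0 y)); lra.
Qed.

End LocalEquation.

Section ComplexModulus.
Variable R : realType.
Implicit Types (x y z : R[i]).

Lemma normc_ge0 z : 0 <= normc z.
Proof. by case: z => a b; apply: sqrtr_ge0. Qed.

Lemma normc_real (a : R) : normc a%:C = `|a|.
Proof. by rewrite /normc /= expr0n /= addr0 sqrtr_sqr. Qed.

(* [le_normcD] and [normcN] are stated on the alias [Rcomplex R]. *)
Lemma normc_add x y : normc (x + y) <= normc x + normc y.
Proof. exact: le_normcD. Qed.

Lemma normc_opp x : normc (- x) = normc x.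
Proof. exact: normcN. Qed.

Lemma normc_expr x n : normc (x ^+ n) = normc x ^+ n.
Proof. by elim: n => [|n IHn]; rewrite ?normc1 // !exprS normcM IHn. Qed.

Lemma normc_gt0 z : (0 < normc z) = (z != 0).
Proof.
rewrite lt_def normc_ge0 andbT; congr negb.
by apply/eqP/eqP => [/eq0_normc // | ->]; exact: normc0.
Qed.

End ComplexModulus.

Section GaugeLimit.
Variables (R : realType) (T : Type) (gauge : T -> R).
Local Notation C := R[i].

Definition tends (F : T -> C) (L : C) :=
  forall e, 0 < e -> exists2 d, 0 < d & forall p, gauge p < d -> normc (F p - L) < e.

Lemma tends_eq F L M : tends F L -> L = M -> tends F M.
Proof. by move=> + <-. Qed.

Lemma tends_ext F G L : (forall p, F p = G p) -> tends F L -> tends G L.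
Proof.
move=> FG FL e e_gt0; have [d d_gt0 hd] := FL e e_gt0.
by exists d => // p /hd; rewrite FG.
Qed.

Lemma tends_const a : tends (fun=> a) a.
Proof. by move=> e e_gt0; exists 1 => // p _; rewrite subrr normc0. Qed.

Lemma tends_add F G L M : tends F L -> tends G M -> tends (fun p => F p + G p) (L + M).
Proof.
move=> FL GM e e_gt0; have e2_gt0 : 0 < e / 2 by rewrite divr_gt0.
have [d1 d1_gt0 h1] := FL _ e2_gt0; have [d2 d2_gt0 h2] := GM _ e2_gt0.
exists (Num.min d1 d2) => [|p]; first by rewrite lt_min d1_gt0 d2_gt0.
rewrite lt_min => /andP[/h1 p1 /h2 p2].
have -> : F p + G p - (L + M) = (F p - L) + (G p - M) by ring.
by have := normc_add (F p - L) (G p - M); lra.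
Qed.

Lemma tends_opp F L : tends F L -> tends (fun p => - F p) (- L).
Proof.
move=> FL e e_gt0; have [d d_gt0 hd] := FL e e_gt0.
by exists d => // p /hd; rewrite -opprD normc_opp.
Qed.

Lemma tends_mul F G L M : tends F L -> tends G M -> tends (fun p => F p * G p) (L * M).
Proof.
move=> FL GM e e_gt0.
have L0 := normc_ge0 L; have M0 := normc_ge0 M.
have e1_gt0 : 0 < Num.min 1 (e / (2 * (normc M + 1))).
  by rewrite lt_min ltr01 divr_gt0 // mulr_gt0 //; lra.
have e2_gt0 : 0 < e / (2 * (normc L + 2)) by rewrite divr_gt0 // mulr_gt0 //; lra.
have [d1 d1_gt0 h1] := FL _ e1_gt0; have [d2 d2_gt0 h2] := GM _ e2_gt0.
exists (Num.min d1 d2) => [|p]; first by rewrite lt_min d1_gt0 d2_gt0.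
rewrite lt_min => /andP[/h1 + /h2]; rewrite lt_min => /andP[u1 u2] v2.
move: u1 u2 v2; set u := normc (F p - L); set v := normc (G p - M) => u1 u2 v2.
have u0 : 0 <= u := normc_ge0 _; have v0 : 0 <= v := normc_ge0 _.
rewrite ltr_pdivlMr in u2; last by lra.
rewrite ltr_pdivlMr in v2; last by lra.
have Fp : normc (F p) <= normc L + u.
  by rewrite (_ : F p = L + (F p - L)); [exact: normc_add | ring].
have -> : F p * G p - L * M = F p * (G p - M) + (F p - L) * M by ring.
apply: (le_lt_trans (normc_add _ _)); rewrite !normcM -/u -/v.
by have := normc_ge0 (F p); nra.
Qed.

Lemma tends_expr F L n : tends F L -> tends (fun p => F p ^+ n) (L ^+ n).
Proof.
move=> FL; elim: n => [|n IHn].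
  by apply: tends_ext (tends_const 1) => p; rewrite expr0.
by rewrite exprS; apply: tends_ext (tends_mul FL IHn) => p; rewrite exprS.
Qed.

Lemma tends_sum (I : Type) (s : seq I) (F : I -> T -> C) (L : I -> C) :
  (forall i, tends (F i) (L i)) ->
  tends (fun p => \sum_(i <- s) F i p) (\sum_(i <- s) L i).
Proof.
move=> FL; elim: s => [|i s IHs].
  by rewrite big_nil; apply: tends_ext (tends_const 0) => p; rewrite big_nil.
by rewrite big_cons; apply: tends_ext (tends_add (FL i) IHs) => p; rewrite big_cons.
Qed.

Lemma tends_prod (I : Type) (s : seq I) (F : I -> T -> C) (L : I -> C) :
  (forall i, tends (F i) (L i)) ->
  tends (fun p => \prod_(i <- s) F i p) (\prod_(i <- s) L i).
Proof.
move=> FL; elim: s => [|i s IHs].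
  by rewrite big_nil; apply: tends_ext (tends_const 1) => p; rewrite big_nil.
by rewrite big_cons; apply: tends_ext (tends_mul (FL i) IHs) => p; rewrite big_cons.
Qed.

Lemma tends_mmap n (f : {rmorphism R -> C}) (P : {mpoly R[n]})
    (v : T -> 'I_n -> C) (v0 : 'I_n -> C) :
  (forall i, tends (fun p => v p i) (v0 i)) ->
  tends (fun p => mmap f (v p) P) (mmap f v0 P).
Proof.
move=> vv0; apply: tends_sum => m; apply: tends_mul; first exact: tends_const.
by apply: tends_prod => i; apply: tends_expr.
Qed.

Lemma tends_normc_gt F L : tends F L -> L != 0 ->
  exists2 d, 0 < d & forall p, gauge p < d -> normc L / 2 < normc (F p).
Proof.
move=> FL L_neq0; have L2_gt0 : 0 < normc L / 2 by rewrite divr_gt0 ?normc_gt0.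
have [d d_gt0 hd] := FL _ L2_gt0; exists d => // p /hd close.
have : normc L <= normc (F p) + normc (L - F p).
  by rewrite {1}(_ : L = F p + (L - F p)); [exact: normc_add | ring].
by rewrite -[L - F p]opprB normc_opp; lra.
Qed.

End GaugeLimit.

Section SmallRoot.
Variable R : realType.
Local Notation C := R[i].

Lemma exists_small_root (p : {poly C}) (e : R) : 0 < e ->
  normc p.[0] < e ^+ (size p).-1 * normc (lead_coef p) ->
  exists2 z, root p z & normc z < e.
Proof.
move=> e_gt0 p0_small; have [rs pE] := closed_field_poly_normal p.
have p_neq0 : p != 0.
  by apply: contraTneq p0_small => ->; rewrite horner0 lead_coef0 normc0 mulr0 ltxx.
have lc_neq0 : lead_coef p != 0 by rewrite lead_coef_eq0.
have root_rs z : z \in rs -> root p z by rewrite pE rootZ // root_prod_XsubC.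
have [/hasP[z /root_rs rz z_small] | /hasPn big_roots] := boolP (has (fun z => normc z < e) rs).
  by exists z.
have size_rs : (size p).-1 = size rs by rewrite {1}pE size_scale // size_prod_XsubC.
have p0E : normc p.[0] = normc (lead_coef p) * \prod_(z <- rs) normc z.
  rewrite {1}pE hornerZ horner_prod normcM (big_morph _ (@normcM R) (@normc1 R)).
  by congr (_ * _); apply: eq_bigr => z _; rewrite hornerXsubC sub0r normc_opp.
have : e ^+ size rs <= \prod_(z <- rs) normc z.
  have -> : e ^+ size rs = \prod_(z <- rs) e by rewrite big_const_seq count_predT iter_mulr_1.
  rewrite big_seq [X in _ <= X]big_seq; apply: ler_prod => z z_rs.
  by rewrite (ltW e_gt0) leNgt (big_roots z z_rs).
move: p0_small; rewrite p0E size_rs; have := normc_ge0 (lead_coef p); nra.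
Qed.

End SmallRoot.

Section PairGauge.
Variable R : realType.
Local Notation C := R[i].

Definition pair_gauge (p : C * C) : R := normc p.1 + normc p.2.

Lemma tends_fst : tends pair_gauge (fun p => p.1) 0.
Proof.
move=> e e_gt0; exists e => // p; rewrite subr0 /pair_gauge.
by have := normc_ge0 p.2; lra.
Qed.

Lemma tends_snd : tends pair_gauge (fun p => p.2) 0.
Proof.
move=> e e_gt0; exists e => // p; rewrite subr0 /pair_gauge.
by have := normc_ge0 p.1; lra.
Qed.

End PairGauge.
Arguments pair_gauge {R}.

Ltac tends_poly := repeat lazymatch goal with
  | |- tends _ (fun p => @?A p + @?B p) _ => apply: tends_add
  | |- tends _ (fun p => @?A p * @?B p) _ => apply: tends_mul
  | |- tends _ (fun p => - @?A p) _ => apply: tends_opp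
  | |- tends _ (fun p => @?A p ^+ _) _ => apply: tends_expr
  | |- tends _ fst _ => apply: tends_fst
  | |- tends _ snd _ => apply: tends_snd
  | |- tends _ (fun p => _) _ => apply: tends_const
  end.

Section QuadricCurve.
Variable R : realType.
Local Notation C := R[i].

(* For al = (1 - c)/(2 s) and be = (1 + c)/(2 s) this point satisfies
   (1 + c) Y - s X = - z a, (1 - c) Y + s X = z u (2 - a u) and
   W (2 Z - W) = z^2 a u (2 - a u), whence
   F_1 = ((1 + c) Y - s X) ((1 - c) Y + s X) + W (2 Z - W) = 0. *)
Definition quadric_pt (al be z a u : C) : 'I_4 -> C := fun i =>
  nth 0 [:: z * ((al - be * u ^+ 2) * a + 2 * be * u); z * (u - (1 + u ^+ 2) / 2 * a);
            z; z * (a * u)] i.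

Lemma quadric_pt_on_F1 (s c z a u : C) : s != 0 ->
  let V := quadric_pt ((1 - c) / (2 * s)) ((1 + c) / (2 * s)) z a u in
  V 1 ^+ 2 - (V 0 * s - V 1 * c) ^+ 2 + 2 * V 2 * V 3 - V 3 ^+ 2 = 0.
Proof. by move=> s_neq0; rewrite /quadric_pt /=; field. Qed.

(* Along [quadric_pt al be 1 a u] one has X = A a + B, Y = D a + u, W = a u,
   so F_2 = (p2 a^2 + p1 a + B^2)^2 - w a^2 (q2 a^2 + q1 a + q0); these are
   its coefficients in a, lowest degree first. *)
Definition curve_coefs (k r al be u : C) : seq C :=
  let A := al - be * u ^+ 2 in let B := 2 * be * u in let D := - (1 + u ^+ 2) / 2 in
  let p2 := A ^+ 2 + (r ^+ 2 + k ^+ 2) * u ^+ 2 in let p1 := 2 * A * B - 2 * k * u in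
  let q2 := A ^+ 2 + D ^+ 2 in let q1 := 2 * (A * B + D * u) in let q0 := B ^+ 2 + u ^+ 2 in
  let w := 4 * r ^+ 2 * u ^+ 2 in
  [:: B ^+ 4; 2 * B ^+ 2 * p1; p1 ^+ 2 + 2 * B ^+ 2 * p2 - w * q0;
      2 * p1 * p2 - w * q1; p2 ^+ 2 - w * q2].

Lemma F2h_on_quadric_pt (k r : R) (al be z a u : C) :
  mmap (real_complex R) (quadric_pt al be z a u) (F2h k r) =
  z ^+ 4 * (Poly (curve_coefs k%:C r%:C al be u)).[a].
Proof.
rewrite mmap_F2h /curve_coefs /= !horner_cons horner0 /quadric_pt /=.
rewrite !(rmorphM, rmorphD, rmorphXn, rmorph_nat) /=.
ring.
Qed.

Lemma curve_lead_tends (k r al be : C) :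
  tends pair_gauge (fun p => last 1 (curve_coefs k r al be p.2)) (al ^+ 4).
Proof.
rewrite /curve_coefs /=.
apply: tends_eq; first by tends_poly.
ring.
Qed.

Lemma quadric_pt_tends (al be z : C) (i : 'I_4) :
  tends pair_gauge (fun p => quadric_pt al be z p.1 p.2 i) (nth 0 [:: 0; 0; z; 0] i).
Proof.
case: i => [[|[|[|[|//]]]] ?]; rewrite /quadric_pt /=;
  by apply: tends_eq; [tends_poly | ring].
Qed.

End QuadricCurve.

Section Saturation.
Variables (R : realType) (k r t : R).

Lemma F1h_in_saturation : in_saturation k r t (F1h t).
Proof. by exists 0%N, 1, 0; rewrite expr0 !mul1r mul0r addr0. Qed.

Lemma F2h_in_saturation : in_saturation k r t (F2h k r).
Proof. by exists 0%N, 0, 1; rewrite expr0 !mul1r mul0r add0r. Qed.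

Lemma in_saturation_mmap_eq0 (S : idomainType) (f : {rmorphism R -> S}) (v : 'I_4 -> S) P :
  in_saturation k r t P -> mmap f v (F1h t) = 0 -> mmap f v (F2h k r) = 0 ->
  v 3 != 0 -> mmap f v P = 0.
Proof.
case=> m [A [B]]; move: (F1h t) (F2h k r) => F1 F2 PE F1v F2v v3_neq0.
have := congr1 (mmap f v) PE; rewrite !(rmorphD, rmorphM, rmorphXn) /= F1v F2v.
rewrite /vW mmapX mmap1U !mulr0 addr0 => /eqP.
by rewrite mulf_eq0 expf_eq0 (negbTE v3_neq0) andbF => /eqP.
Qed.

End Saturation.

Lemma mmap_real_complex (R : realType) n (P : {mpoly R[n]}) (w : 'I_n -> R) :
  mmap (real_complex R) (fun i => (w i)%:C) P = (P.@[w])%:C.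
Proof.
rewrite /meval /mmap rmorph_sum; apply: eq_bigr => m _.
rewrite rmorphM /mmap1 rmorph_prod; congr (_ * _).
by apply: eq_bigr => i _; rewrite rmorphXn.
Qed.

Section PointAtInfinity.
Variables (R : realType) (k r t : R).
Hypothesis ht : t != 0.
Local Notation C := R[i].

Lemma in_closure_at_infinity x y z :
  in_closure k r t x y z 0 -> x = 0 /\ y = 0 /\ z != 0.
Proof.
case=> nz vanish; have := vanish _ (F1h_in_saturation k r t).
have := vanish _ (F2h_in_saturation k r t); rewrite meval_F1h meval_F2h /pt4 /= => F2v F1v.
have x0 : x = 0.
  have x4 : x ^+ 4 = 0 by rewrite -F2v; ring.
  by move/eqP: x4; rewrite expf_eq0 => /eqP.
have y0 : y = 0.
  have ys : (y * spar t) ^+ 2 = 0.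
    by have := congr1 (fun a => y ^+ 2 * a) (cpar_spar_sqr t); move: F1v; rewrite x0 /=; lra.
  by move/eqP: ys; rewrite expf_eq0 mulf_eq0 (negbTE (spar_neq0 ht)) orbF => /eqP.
by split=> //; split=> //; move: nz; rewrite x0 y0 eqxx /= orbF.
Qed.

Let s : C := (spar t)%:C.
Let c : C := (cpar t)%:C.
Let al : C := (1 - c) / (2 * s).
Let be : C := (1 + c) / (2 * s).
Let V z (p : C * C) := quadric_pt al be z p.1 p.2.

Let s_neq0 : s != 0. Proof. by rewrite fmorph_eq0 spar_neq0. Qed.

Let al_neq0 : al != 0.
Proof.
rewrite /al (_ : 1 - c = (1 - cpar t)%:C); last by rewrite rmorphB rmorph1.
by rewrite mulf_neq0 ?invr_eq0 ?mulf_neq0 ?pnatr_eq0 ?fmorph_eq0 ?subr_cpar_neq0 ?spar_neq0.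
Qed.

Let be_neq0 : be != 0.
Proof.
rewrite /be (_ : 1 + c = (1 + cpar t)%:C); last by rewrite rmorphD rmorph1.
by rewrite mulf_neq0 ?invr_eq0 ?mulf_neq0 ?pnatr_eq0 ?fmorph_eq0 ?addr_cpar_neq0 ?spar_neq0.
Qed.

Lemma curve_lead_bounded_below :
  exists2 d, 0 < d & forall u, normc u < d ->
    normc al ^+ 4 / 2 < normc (last 1 (curve_coefs k%:C r%:C al be u)).
Proof.
have [d d_gt0 lead_big] := tends_normc_gt (curve_lead_tends k%:C r%:C al be) (expf_neq0 4 al_neq0).
exists d => // u u_small; rewrite -normc_expr.
by apply: (lead_big (0, u)); rewrite /pair_gauge normc0 add0r.
Qed.

Lemma curve_points_near z eta : z != 0 -> 0 < eta ->
  exists p, [/\ pair_gauge p < eta,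
    mmap (real_complex R) (V z%:C p) (F1h t) = 0,
    mmap (real_complex R) (V z%:C p) (F2h k r) = 0 & V z%:C p 3 != 0].
Proof.
move=> z_neq0 eta_gt0; have [d d_gt0 lead_big] := curve_lead_bounded_below.
have A_gt0 : 0 < normc al by rewrite normc_gt0.
have B_ge0 := normc_ge0 (2 * be).
pose m := Num.min d (Num.min eta (eta * normc al / (4 * (normc (2 * be) + 1)))).
have m_gt0 : 0 < m by rewrite !lt_min d_gt0 eta_gt0 !divr_gt0 ?mulr_gt0 //; lra.
have [m_d m_eta m_be] : [/\ m <= d, m <= eta & m <= eta * normc al / (4 * (normc (2 * be) + 1))].
  by rewrite !ge_min !lexx !orbT.
pose u : C := (m / 2)%:C.
have u_norm : normc u = m / 2 by rewrite normc_real ger0_norm // divr_ge0 // ltW.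
set cs := curve_coefs k%:C r%:C al be u.
have lead_cs : normc al ^+ 4 / 2 < normc (last 1 cs) by apply: lead_big; lra.
have last_neq0 : last 1 cs != 0.
  by rewrite -normc_gt0; apply: le_lt_trans lead_cs; rewrite divr_ge0 ?exprn_ge0 ?ltW.
have csE : Poly cs = cs :> seq C := PolyK last_neq0.
have head_cs : (Poly cs).[0] = (2 * be * u) ^+ 4 by rewrite horner_coef0 csE.
have u_neq0 : u != 0 by rewrite -normc_gt0 u_norm divr_gt0.
have head_neq0 : (2 * be * u) ^+ 4 != 0.
  by rewrite expf_neq0 // (mulf_neq0 (mulf_neq0 _ be_neq0) u_neq0) // pnatr_eq0.
have small_head :
    normc (Poly cs).[0] < (eta / 2) ^+ (size (Poly cs)).-1 * normc (lead_coef (Poly cs)).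
  have lcE : cs`_(size cs).-1 = last 1 cs by [].
  rewrite lead_coefE csE lcE head_cs normc_expr normcM u_norm.
  apply: small_pow4_lt lead_cs => //; first by have := mulr_ge0 B_ge0 (ltW m_gt0); lra.
  by move: m_be; rewrite ler_pdivlMr ?mulr_gt0; nra.
have [a root_a a_small] := exists_small_root (divr_gt0 eta_gt0 (ltr0Sn _ 1)) small_head.
have a_neq0 : a != 0 by apply: contraTneq root_a => ->; rewrite /root head_cs.
exists (a, u); split.
- change (normc a + normc u < eta); rewrite u_norm [eta]splitr.
  by apply: ltr_leD => //; rewrite ler_pM2r ?invr_gt0.
- by rewrite mmap_F1h; exact: (quadric_pt_on_F1 c z%:C a u s_neq0).
- by rewrite /V F2h_on_quadric_pt (rootP root_a) mulr0.
- by rewrite /V /quadric_pt /= (mulf_neq0 _ (mulf_neq0 a_neq0 u_neq0)) // fmorph_eq0.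
Qed.

Lemma at_infinity_in_closure z : z != 0 -> in_closure k r t 0 0 z 0.
Proof.
move=> z_neq0; split=> [|P satP]; first by rewrite eqxx /= z_neq0.
apply/eqP; apply: contraT => value_neq0.
have lim : tends pair_gauge (fun p => mmap (real_complex R) (V z%:C p) P) (P.@[pt4 0 0 z 0])%:C.
  rewrite -mmap_real_complex; apply: tends_mmap => i.
  apply: tends_eq (quadric_pt_tends al be z%:C i) _.
  by case: i => [[|[|[|[|//]]]] ?].
have value_gt0 : 0 < normc (P.@[pt4 0 0 z 0])%:C by rewrite normc_gt0 fmorph_eq0.
have [d d_gt0 close] := lim _ value_gt0.
have [p [gp F1p F2p W_neq0]] := curve_points_near z_neq0 d_gt0.
have := close p gp; rewrite (in_saturation_mmap_eq0 satP F1p F2p W_neq0).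
by rewrite sub0r normc_opp ltxx.
Qed.

End PointAtInfinity.

Theorem theorem4 (R : realType) (k r t : R) (hr : 0 < r) (ht : t != 0) :
  let c := cpar t in let s := spar t in
  (* T meets the plane at infinity W = 0 exactly in p_oo = [0:0:1:0] *)
  (forall x y z : R, in_closure k r t x y z 0 <->
     (x = 0 /\ y = 0 /\ z != 0)) /\
  (* first nonzero homogeneous term of the local equation at p_oo is E^2 *)
  (forall omega : R -> R -> R, local_solution t omega ->
     leading_form_is (local_eq k r t omega)
       (fun X Y => (Eform k s c X Y) ^+ 2) 4) /\
  (* discriminant of E *)
  qdisc (Eform k s c) = 4 * k * s ^+ 2 * (k - 1) /\
  (* degeneration of the asymptotic direction pattern *)
  ((~ factors_distinct_lin (Eform (real_complex R k) (real_complex R s) (real_complex R c))) <->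
     qdisc (Eform k s c) = 0) /\
  (qdisc (Eform k s c) = 0 <-> (k = 0 \/ k = 1)).
Proof.
move=> c s; have cs1 : c ^+ 2 + s ^+ 2 = 1 := cpar_spar_sqr t.
split.
  move=> x y z; split; first exact: in_closure_at_infinity.
  by case=> -> [-> z_neq0]; exact: at_infinity_in_closure.
split; first exact: local_eq_leading_form.
split; first exact: qdisc_Eform.
split; first exact: not_factors_distinct_lin_Eform.
exact: qdisc_Eform_eq0 (spar_neq0 ht).
Qed.
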